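(* Let $p_1,p_2\in(0,1)$ and let $\{X^1_k\}_{k\ge1}$, $\{X^2_k\}_{k\ge1}$ be two independent sequences of i.i.d. Bernoulli random variables with success parameters $p_1$ and $p_2$ respectively. Set $S^j(n)=\sum_{i=1}^n X^j_i$ for $j=1,2$ and $J^2=\inf\{n\ge1: S^1(n)=S^2(n)\}$ (with $\inf\emptyset=\infty$). Then $P(J^2=\infty)=|p_1-p_2|$, and for all $p_1,p_2\in(0,1)$ we have $E(J^2)=\infty$.
   Context: All random variables $X^j_k$ ($j=1,2$, $k\ge1$) are mutually independent, and $P(X^j_k=1)=p_j=1-P(X^j_k=0)$. *)

From HB Require Import structures.
From mathcomp Require Import all_boot all_order all_algebra.
From mathcomp Require Import all_classical all_reals all_analysis.
Set Implicit Arguments. Unset Strict Implicit. Unset Printing Implicit Defensive.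
Import Order.TTheory GRing.Theory Num.Theory.
Local Open Scope classical_set_scope.
Local Open Scope ring_scope.

Definition mutually_independent {d} {T : measurableType d} {R : realType}
  (P : probability T R) {I : eqType} (D : set I) (X : I -> T -> R) : Prop :=
  forall (F : seq I) (B : I -> set R),
    uniq F -> (forall i, i \in F -> D i) -> (forall i, measurable (B i)) ->
    P (\bigcap_(i in [set i | i \in F]) (X i @^-1` B i)) =
    (\prod_(i <- F) P (X i @^-1` B i))%E.

Definition Ssum {T : Type} {R : realType} (X : nat -> nat -> T -> R)
  (j n : nat) (x : T) : R := \sum_(1 <= i < n.+1) X j i x.

Definition J2 {T : Type} {R : realType} (X : nat -> nat -> T -> R) (x : T)
  : \bar R :=
  ereal_inf [set (n%:R)%:E | n in [set n : nat | (0 < n)%N /\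
                                     Ssum X 1 n x = Ssum X 2 n x]].

(* The difference D_n = S^1(n) - S^2(n) is a random walk with i.i.d. steps +1,
   -1, 0 of probabilities p1 (1 - p2), (1 - p1) p2 and the rest, of mean
   mu = p1 - p2 and variance sigma^2 = p1 (1 - p1) + p2 (1 - p2) > 0, and
   {J^2 > n} is the event that D_1, ..., D_n are all nonzero.  As the steps are
   exchangeable and skip-free, the ballot theorem gives n P(J^2 > n) = E|D_n|.
   Hence |mu| <= P(J^2 > n) <= |mu| + eps/2 + sigma^2 / (2 eps n), so
   P(J^2 = oo) = lim P(J^2 > n) = |mu|; and since |D_n| <= n,
   P(J^2 > n) >= E[D_n^2] / n^2 >= sigma^2 / n, so E J^2 = sum_n P(J^2 > n)
   diverges like the harmonic series.  By independence the law of the first n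
   steps is a product measure, so all expectations of D_n are finite sums over
   the 4^n step sequences. *)

From mathcomp Require Import all_boot all_order all_algebra.
From mathcomp Require Import all_classical all_reals all_analysis.
From mathcomp Require Import measurable_realfun.
From mathcomp Require Import ring lra zify.
Set Implicit Arguments. Unset Strict Implicit. Unset Printing Implicit Defensive.
Import Order.TTheory GRing.Theory Num.Theory.
Import numFieldTopology.Exports.
Local Open Scope classical_set_scope.
Local Open Scope ring_scope.

(* A step records the outcomes (X^1_k = 1, X^2_k = 1) at one time k; it moves
   the difference D = S^1 - S^2 by [incr]. *)
Notation step := (bool * bool)%type.

Definition steps : seq step :=
  [:: (true, true); (true, false); (false, true); (false, false)].

Definition incr (s : step) : int :=
  match s with (true, false) => 1 | (false, true) => -1 | _ => 0 end.

(* A path of length n lists the steps of times n, n-1, ..., 1, latest first. *)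
Fixpoint walk (w : seq step) : int :=
  if w is s :: w' then incr s + walk w' else 0.

Fixpoint avoids0 (w : seq step) : bool :=
  if w is s :: w' then (walk w != 0) && avoids0 w' else true.

Fixpoint paths n : seq (seq step) :=
  if n is n'.+1 then [seq s :: w | w <- paths n', s <- steps] else [:: [::]].

Lemma size_paths n w : w \in paths n -> size w = n.
Proof.
elim: n w => [|n IH] w; first by rewrite inE => /eqP ->.
by case/allpairsPdep => v [s [/IH <- _ ->]].
Qed.
Arguments size_paths {n w}.

Lemma abs_walk_le w : `|walk w| <= (size w)%:Z.
Proof.
elim: w => [|s w IH] //=; rewrite (le_trans (ler_normD _ _)) //.
have : `|incr s| <= 1 by case: s => [[] []].
by move: IH; rewrite -addn1 PoszD; lia.
Qed.

Section WalkExpectation.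
Variables (R : realFieldType) (q : step -> R).

Fixpoint path_wt (w : seq step) : R :=
  if w is s :: w' then q s * path_wt w' else 1.

(* For i.i.d. steps of law q: walkE n h = E[h(D_n)],
   avoidE n h = E[h(D_n); D_1, ..., D_n <> 0], stepE h x = E[h(x + incr s)] and
   incr_stepE h x = E[incr s * h(x + incr s)]. *)
Definition walkE n (h : int -> R) :=
  \sum_(w <- paths n) h (walk w) * path_wt w.

Definition avoidE n (h : int -> R) :=
  \sum_(w <- paths n) (avoids0 w)%:R * h (walk w) * path_wt w.

Definition stepE (h : int -> R) x := \sum_(s <- steps) q s * h (x + incr s).

Definition incr_stepE (h : int -> R) x :=
  \sum_(s <- steps) q s * (incr s)%:~R * h (x + incr s).

Lemma walkE0 h : walkE 0 h = h 0.
Proof. by rewrite /walkE big_seq1 mulr1. Qed.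

Lemma avoidE0 h : avoidE 0 h = h 0.
Proof. by rewrite /avoidE big_seq1 mulr1 mul1r. Qed.

Lemma walkES n h : walkE n.+1 h = walkE n (stepE h).
Proof.
rewrite /walkE big_allpairs_dep; apply: eq_bigr => w _.
rewrite /stepE big_distrl; apply: eq_bigr => s _ /=.
by rewrite [incr s + _]addrC mulrA [h _ * _]mulrC.
Qed.

Lemma avoidES n h : avoidE n.+1 h = avoidE n (stepE (fun y => (y != 0)%:R * h y)).
Proof.
rewrite /avoidE big_allpairs_dep; apply: eq_bigr => w _.
rewrite /stepE big_distrr big_distrl; apply: eq_bigr => s _ /=.
rewrite [incr s + _]addrC.
by case: (avoids0 w); case: (walk w + incr s != 0) => /=; ring.
Qed.

Lemma eq_walkE n f g : f =1 g -> walkE n f = walkE n g.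
Proof. by move=> fg; apply: eq_bigr => w _; rewrite fg. Qed.
Arguments eq_walkE n {f g}.

Lemma walkED n f g : walkE n (fun x => f x + g x) = walkE n f + walkE n g.
Proof. by rewrite /walkE -big_split; apply: eq_bigr => w _; rewrite mulrDl. Qed.

Lemma walkEZ n c f : walkE n (fun x => c * f x) = c * walkE n f.
Proof. by rewrite /walkE big_distrr; apply: eq_bigr => w _; rewrite /= mulrA. Qed.

Lemma stepE_mulx h x :
  stepE (fun y => y%:~R * h y) x = x%:~R * stepE h x + incr_stepE h x.
Proof. by rewrite /stepE /incr_stepE !big_cons !big_nil /= !intrD; ring. Qed.

Lemma incr_stepE_comm h x : incr_stepE (stepE h) x = stepE (incr_stepE h) x.
Proof.
rewrite /stepE /incr_stepE.
under eq_bigr do rewrite big_distrr.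
under [RHS]eq_bigr do rewrite big_distrr.
rewrite [RHS]exchange_big; apply: eq_bigr => s _; apply: eq_bigr => t _ /=.
by rewrite [x + incr t + incr s]addrAC; ring.
Qed.

(* By exchangeability each of the n+1 steps contributes equally to
   E[D_(n+1) h(D_(n+1))]. *)
Lemma walkE_mulx n h :
  walkE n.+1 (fun x => x%:~R * h x) = n.+1%:R * walkE n (incr_stepE h).
Proof.
elim: n h => [|n IH] h; first by rewrite walkES !walkE0 stepE_mulx mul0r add0r mul1r.
rewrite walkES (eq_walkE n.+1 (stepE_mulx h)) walkED IH.
rewrite (eq_walkE n (incr_stepE_comm h)) -walkES.
by rewrite -[n.+2]addn1 natrD mulrDl mul1r.
Qed.

(* The walk is skip-free, so x and x + c never have strictly opposite signs. *)
Lemma skip_free_sign (x c : int) : `|c| <= 1 ->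
  `|x|%:~R * (x + c != 0)%:R = x%:~R * (sgz (x + c))%:~R :> R.
Proof.
move=> c1.
have [->|[[xc0 x0]|[xc0 x0]]] :
  x + c = 0 \/ (0 < x + c /\ 0 <= x) \/ (x + c < 0 /\ x <= 0) by lia.
- by rewrite sgz0 !mulr0.
- by rewrite gt_eqF // (gtr0_sgz xc0) ger0_norm // !mulr1.
- by rewrite lt_eqF // (ltr0_sgz xc0) ler0_norm // mulr1 intrN mulrN1.
Qed.

Lemma stepE_sign h x : `|x|%:~R * stepE (fun y => (y != 0)%:R * h y) x =
  x%:~R * stepE (fun y => (sgz y)%:~R * h y) x.
Proof.
rewrite /stepE !big_distrr; apply: eq_bigr => s _ /=.
rewrite mulrCA [RHS]mulrCA; congr (_ * _).
by rewrite !mulrA skip_free_sign //; case: s => [[] []].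
Qed.

Lemma abs_sgz (x : int) : `|x|%:~R = x%:~R * (sgz x)%:~R :> R.
Proof.
have [->|x0] := eqVneq x 0; first by rewrite normr0 !mul0r.
by have := @skip_free_sign x 0; rewrite addr0 x0 mulr1 => ->.
Qed.

(* Takacs' ballot theorem for walks with exchangeable steps in {-1, 0, 1}. *)
Lemma ballot n h : avoidE n.+1 h * n.+1%:R = walkE n.+1 (fun x => `|x|%:~R * h x).
Proof.
elim: n h => [|n IH] h.
  rewrite avoidES avoidE0 walkES walkE0 mulr1 /stepE !big_cons !big_nil /= !add0r.
  by rewrite normr0 normr1 normrN1.
(* Both sides reduce to n+2 times walkE n.+1 (incr_stepE (fun y => sgz y * h y)). *)
rewrite avoidES.
have := IH (stepE (fun y => (y != 0)%:R * h y)).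
rewrite (eq_walkE n.+1 (stepE_sign h)) walkE_mulx (eq_walkE n (incr_stepE_comm _)).
rewrite -walkES mulrC.
move/(mulfI _) => ->; last by rewrite pnatr_eq0.
rewrite (@eq_walkE n.+2 _ (fun x => x%:~R * ((sgz x)%:~R * h x))); last first.
  by move=> x; rewrite abs_sgz mulrA.
by rewrite walkE_mulx mulrC.
Qed.

Hypothesis q_ge0 : forall s, 0 <= q s.
Hypothesis q_sum1 : \sum_(s <- steps) q s = 1.

Definition step_mean := q (true, false) - q (false, true).
Definition step_sqmean := q (true, false) + q (false, true).
Definition step_var := step_sqmean - step_mean ^+ 2.

Lemma path_wt_ge0 w : 0 <= path_wt w.
Proof. by elim: w => [|s w IH] //=; rewrite mulr_ge0. Qed.

Lemma ler_walkE n f g : (forall x, `|x| <= n%:Z -> f x <= g x) ->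
  walkE n f <= walkE n g.
Proof.
move=> fg; rewrite /walkE big_seq [leRHS]big_seq; apply: ler_sum => w wn.
by rewrite ler_wpM2r ?path_wt_ge0 // fg // -(size_paths wn) abs_walk_le.
Qed.

Lemma norm_walkE_le n f : `|walkE n f| <= walkE n (fun x => `|f x|).
Proof.
rewrite /walkE (le_trans (ler_norm_sum _ _ _)) //; apply: ler_sum => w _.
by rewrite normrM (ger0_norm (path_wt_ge0 w)).
Qed.

Let q_ff : q (false, false) = 1 - q (true, true) - q (true, false) - q (false, true).
Proof. by move: q_sum1; rewrite !big_cons big_nil; lra. Qed.

Lemma stepE_cst c x : stepE (fun=> c) x = c.
Proof. by rewrite /stepE !big_cons big_nil q_ff; ring. Qed.

Lemma stepE_id x : stepE (fun y => y%:~R) x = x%:~R + step_mean.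
Proof. by rewrite /stepE /step_mean !big_cons big_nil /= !intrD q_ff; ring. Qed.

Lemma stepE_sqr x : stepE (fun y => y%:~R ^+ 2) x =
  x%:~R ^+ 2 + 2 * step_mean * x%:~R + step_sqmean.
Proof.
by rewrite /stepE /step_mean /step_sqmean !big_cons big_nil /= !intrD q_ff; ring.
Qed.

Lemma walkE_cst n c : walkE n (fun=> c) = c.
Proof.
elim: n => [|n IH]; first by rewrite walkE0.
by rewrite walkES (eq_walkE n (stepE_cst c)).
Qed.

Lemma walkE_id n : walkE n (fun x => x%:~R) = n%:R * step_mean.
Proof.
elim: n => [|n IH]; first by rewrite walkE0 mul0r.
rewrite walkES (eq_walkE n stepE_id) walkED IH.
by rewrite walkE_cst -addn1 natrD; ring.
Qed.

Lemma walkE_sqr n : walkE n (fun x => x%:~R ^+ 2) =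
  n%:R * step_var + (n%:R * step_mean) ^+ 2.
Proof.
elim: n => [|n IH]; first by rewrite walkE0 !mul0r expr0n add0r.
rewrite walkES (eq_walkE n stepE_sqr) 2!walkED IH walkEZ walkE_id.
by rewrite walkE_cst -addn1 natrD /step_var; ring.
Qed.

Lemma walkE_centered_sqr n : walkE n (fun x => (x%:~R - n%:R * step_mean) ^+ 2) =
  n%:R * step_var.
Proof.
rewrite (@eq_walkE n _ (fun x => x%:~R ^+ 2 + (- (2 * n%:R * step_mean) * x%:~R
  + (n%:R * step_mean) ^+ 2))); last by move=> x; ring.
by rewrite 2!walkED walkE_sqr walkEZ walkE_id walkE_cst; ring.
Qed.

Definition avoid_prob n := avoidE n (fun _ => 1).

Lemma avoid_prob_ballot n :
  avoid_prob n.+1 * n.+1%:R = walkE n.+1 (fun x => `|x|%:~R).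
Proof. by rewrite /avoid_prob ballot; apply: eq_walkE => x; rewrite mulr1. Qed.

Lemma avoid_prob_ge_mean n : `|step_mean| <= avoid_prob n.+1.
Proof.
rewrite -(ler_pM2r (ltr0Sn _ n)) avoid_prob_ballot mulrC.
have := norm_walkE_le n.+1 (fun x => x%:~R).
rewrite walkE_id normrM ger0_norm // => /le_trans; apply.
by apply: ler_walkE => x _; rewrite intr_norm.
Qed.

(* |D_n| <= n, so E|D_n| >= E[D_n^2] / n >= step_var. *)
Lemma avoid_prob_ge_var n : step_var / n.+1%:R <= avoid_prob n.+1.
Proof.
have n0 : 0 < n.+1%:R :> R by rewrite ltr0Sn.
rewrite ler_pdivrMr // -(ler_pM2r n0) avoid_prob_ballot.
have : walkE n.+1 (fun x => x%:~R ^+ 2) <= walkE n.+1 (fun x => n.+1%:R * `|x|%:~R).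
  apply: ler_walkE => x xn.
  rewrite -[x%:~R ^+ 2](real_normK (num_real _)) -intr_norm expr2.
  rewrite ler_wpM2r ?ler0z ?normr_ge0 //.
  by rewrite -[n.+1%:R]/((n.+1%:Z)%:~R : R) ler_int.
rewrite walkEZ walkE_sqr; have := sqr_ge0 (n.+1%:R * step_mean); nra.
Qed.

(* |z| <= z^2 / (2 t) + t / 2 for z = D_n - n step_mean and t = e n. *)
Lemma avoid_prob_le n e : 0 < e ->
  avoid_prob n.+1 <= `|step_mean| + (e + step_var / (e * n.+1%:R)) / 2.
Proof.
move=> e0; set N := n.+1%:R; set t := e * N.
have N0 : 0 < N by rewrite ltr0Sn.
have t0 : 0 < t by rewrite mulr_gt0.
have amgm (z : R) : `|z| <= (2 * t)^-1 * z ^+ 2 + t / 2.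
  rewrite -subr_ge0 -(real_normK (num_real z)).
  have -> : (2 * t)^-1 * `|z| ^+ 2 + t / 2 - `|z| = (`|z| - t) ^+ 2 / (2 * t).
    by field; rewrite gt_eqF.
  by rewrite divr_ge0 ?sqr_ge0 // ltW // mulr_gt0.
rewrite -(ler_pM2r N0) avoid_prob_ballot.
apply: le_trans (_ : walkE n.+1 (fun x => (2 * t)^-1 * (x%:~R - N * step_mean) ^+ 2
                                            + (t / 2 + N * `|step_mean|)) <= _).
  apply: ler_walkE => x _; rewrite addrA intr_norm.
  have := ler_normD (x%:~R - N * step_mean) (N * step_mean).
  by rewrite subrK normrM ger0_norm ?ler0n // => /le_trans; apply; rewrite lerD2r amgm.
rewrite walkED walkEZ walkE_centered_sqr walkE_cst le_eqVlt; apply/orP; left.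
by apply/eqP; rewrite /t; field; rewrite !gt_eqF.
Qed.

Lemma avoid_prob_ge0 n : 0 <= avoid_prob n.
Proof.
case: n => [|n]; first by rewrite /avoid_prob avoidE0.
exact: le_trans (normr_ge0 _) (avoid_prob_ge_mean n).
Qed.

End WalkExpectation.

Section WalkAsymptotics.
Variables (R : realType) (q : step -> R).
Hypothesis q_ge0 : forall s, 0 <= q s.
Hypothesis q_sum1 : \sum_(s <- steps) q s = 1.

Lemma avoid_prob_cvg : avoid_prob q @ \oo --> `|step_mean q|.
Proof.
apply/cvgrPdist_le => e e0; near=> n.
have n1 : (1 <= n)%N by near: n; exact: nbhs_infty_ge.
have var_le : step_var q / e ^+ 2 <= n%:R by near: n; exact: nbhs_infty_ger.
rewrite -(prednK n1) in var_le *.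
rewrite ler0_norm ?subr_le0 ?(avoid_prob_ge_mean q_ge0 q_sum1) // opprB lerBlDl.
apply: le_trans (avoid_prob_le q_ge0 q_sum1 n.-1 e0) _; rewrite lerD2l.
rewrite ler_pdivrMr // mulrDr mulr1 lerD2l.
by rewrite ler_pdivrMr ?mulr_gt0 // mulrA -expr2 -ler_pdivrMl ?exprn_gt0 // mulrC.
Unshelve. all: by end_near.
Qed.

Lemma harmonic_series_oo : (\sum_(k <oo) (harmonic k : R)%:E = +oo)%E.
Proof.
apply: contrapT => /eqP; rewrite -ltey => fin; apply: (@dvg_harmonic R).
by apply: nnseries_is_cvg => // k; exact: harmonic_ge0.
Qed.

Lemma avoid_prob_series_oo : 0 < step_var q ->
  (\sum_(n <oo) (avoid_prob q n)%:E = +oo)%E.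
Proof.
move=> var_gt0; have f_ge0 n : (0 <= (avoid_prob q n)%:E)%E.
  by rewrite lee_fin avoid_prob_ge0.
rewrite nneseries_recl // -(@nneseries_addn _ _ 1) //.
suff -> : (\sum_(i <oo) (avoid_prob q (i + 1))%:E = +oo)%E by rewrite addey.
apply/eqP; rewrite -leye_eq.
have <- : ((step_var q)%:E * \sum_(k <oo) (harmonic k)%:E = +oo)%E.
  by rewrite harmonic_series_oo mulry gtr0_sg // mul1e.
rewrite -nneseriesZl => [|k]; last by rewrite lee_fin harmonic_ge0.
apply: lee_nneseries => [k _ _|k _]; rewrite -EFinM lee_fin.
  exact: mulr_ge0 (ltW var_gt0) (harmonic_ge0 _).
by rewrite addn1; exact: (avoid_prob_ge_var q_ge0 q_sum1).
Qed.

End WalkAsymptotics.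

Definition bernoulli_pair (R : numDomainType) (p1 p2 : R) (s : step) : R :=
  (if s.1 then p1 else 1 - p1) * (if s.2 then p2 else 1 - p2).

Section BernoulliPair.
Variables (R : realFieldType) (p1 p2 : R).

Lemma bernoulli_pair_ge0 : 0 <= p1 <= 1 -> 0 <= p2 <= 1 ->
  forall s, 0 <= bernoulli_pair p1 p2 s.
Proof. by move=> /andP[? ?] /andP[? ?] [[] []]; apply: mulr_ge0; lra. Qed.

Lemma bernoulli_pair_sum1 : \sum_(s <- steps) bernoulli_pair p1 p2 s = 1.
Proof. by rewrite !big_cons big_nil /bernoulli_pair /=; ring. Qed.

Lemma bernoulli_pair_mean : step_mean (bernoulli_pair p1 p2) = p1 - p2.
Proof. by rewrite /step_mean /bernoulli_pair /=; ring. Qed.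

Lemma bernoulli_pair_var :
  step_var (bernoulli_pair p1 p2) = p1 * (1 - p1) + p2 * (1 - p2).
Proof. by rewrite /step_var /step_sqmean /step_mean /bernoulli_pair /=; ring. Qed.

End BernoulliPair.

Lemma probability_split d (T : measurableType d) (R : realType)
    (P : probability T R) (E A B : set T) :
  measurable E -> measurable A -> measurable B -> A `&` B = set0 ->
  P (A `|` B) = 1%E -> P E = (P (E `&` A) + P (E `&` B))%E.
Proof.
move=> mE mA mB AB0 PAB; have mAB : measurable (A `|` B) by exact: measurableU.
have PnAB : P (~` (A `|` B)) = 0%E by rewrite probability_setC // PAB subee.
have PEnAB : P (E `&` ~` (A `|` B)) = 0%E.
  apply/eqP; rewrite -measure_le0 -PnAB le_measure ?inE //.
  - by apply: measurableI => //; exact: measurableC.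
  - exact: measurableC.
have -> : P E = (P (E `&` (A `|` B)) + P (E `&` ~` (A `|` B)))%E.
  rewrite -measureU; first by rewrite -setIUr setUv setIT.
  - exact: measurableI.
  - by apply: measurableI => //; exact: measurableC.
  - by rewrite setIACA setICr setI0.
rewrite PEnAB adde0 setIUr measureU //; try exact: measurableI.
by rewrite setIACA AB0 setI0.
Qed.

Lemma eseries_ltn (R : realType) m :
  (\sum_(n <oo) ((n < m)%N%:R : R)%:E = (m%:R)%:E)%E.
Proof.
apply: lim_near_cst => //; near=> N.
have mN : (m <= N)%N by near: N; exact: nbhs_infty_ge.
rewrite sumEFin (big_cat_nat (leq0n m) mN) /= [X in _ + X]big1_seq ?addr0.
  congr EFin; rewrite -[in RHS](subn0 m) -sumr_const_nat.
  by apply: eq_big_nat => n /andP[_ ->].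
by move=> n /andP[_]; rewrite mem_index_iota leqNgt => /andP[/negbTE ->].
Unshelve. all: by end_near.
Qed.

Lemma eseries_one (R : realType) : (\sum_(n <oo) (1 : R)%:E = +oo)%E.
Proof.
apply/cvg_lim => //; under eq_fun do rewrite sumEFin sumr_const_nat subn0.
exact/cvgenyP.
Qed.

Section TwoBernoulliSequences.
Context d (T : measurableType d) (R : realType) (P : probability T R).
Variables (X : nat -> nat -> T -> R) (p : nat -> R).
Hypothesis X_meas : forall j k, (j = 1%N \/ j = 2%N) -> (1 <= k)%N ->
  measurable_fun setT (X j k).
Hypothesis X_law : forall j k, (j = 1%N \/ j = 2%N) -> (1 <= k)%N ->
  P [set x | X j k x = 1] = (p j)%:E /\ P [set x | X j k x = 0] = (1 - p j)%:E.
Hypothesis X_indep : mutually_independent P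
  [set jk : nat * nat | (jk.1 = 1%N \/ jk.1 = 2%N) /\ (1 <= jk.2)%N]
  (fun jk => X jk.1 jk.2).

Let q := bernoulli_pair (p 1%N) (p 2%N).

Lemma measurable_X_eq j k b : (j = 1%N \/ j = 2%N) -> (1 <= k)%N ->
  measurable [set x | X j k x = b].
Proof.
move=> j12 k1; have := X_meas j12 k1 measurableT (measurable_set1 b).
by rewrite setTI.
Qed.

Lemma X_law_split j k E : (j = 1%N \/ j = 2%N) -> (1 <= k)%N -> measurable E ->
  P E = (P (E `&` [set x | X j k x = 1%R]) + P (E `&` [set x | X j k x = 0%R]))%E.
Proof.
move=> j12 k1 mE; have [P1 P0] := X_law j12 k1.
have disj : [set x | X j k x = 1%R] `&` [set x | X j k x = 0%R] = set0.
  by apply/seteqP; split => x // [/= -> /eqP]; rewrite oner_eq0.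
apply: probability_split => //; try exact: measurable_X_eq.
have -> : 1%E = ((p j)%:E + (1 - p j)%:E)%E by rewrite -EFinD subrKC.
rewrite measureU //; try exact: measurable_X_eq.
by congr (_ + _)%E.
Qed.

Fixpoint path_event (w : seq step) : set T :=
  if w is s :: w' then path_event w' `&`
    [set x | X 1 (size w').+1 x = (s.1 : nat)%:R /\ X 2 (size w').+1 x = (s.2 : nat)%:R]
  else setT.

Lemma measurable_path_event w : measurable (path_event w).
Proof.
elim: w => [|s w IH] //=; apply: measurableI => //.
by apply: measurableI; apply: measurable_X_eq; auto.
Qed.

Lemma measure_path_partition n E : measurable E ->
  P E = (\sum_(w <- paths n) P (E `&` path_event w))%E.
Proof.
elim: n E => [|n IH] E mE; first by rewrite /= big_seq1 setIT.
rewrite (IH E mE) big_allpairs_dep; apply: eq_bigr => w _.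
have mEw : measurable (E `&` path_event w).
  exact: measurableI mE (measurable_path_event w).
have mEwX1 b : measurable (E `&` path_event w `&` [set x | X 1 (size w).+1 x = b]).
  by apply: measurableI => //; apply: measurable_X_eq; [left|].
rewrite (@X_law_split 1 (size w).+1 _ (or_introl erefl) isT mEw).
rewrite !(@X_law_split 2 (size w).+1 _ (or_intror erefl) isT (mEwX1 _)).
by rewrite !big_cons big_nil /= adde0 !addeA -!setIA.
Qed.

Fixpoint path_coords (w : seq step) : seq (nat * nat) :=
  if w is _ :: w' then (1%N, (size w').+1) :: (2%N, (size w').+1) :: path_coords w'
  else [::].

Fixpoint path_value (w : seq step) (jk : nat * nat) : R :=
  if w is s :: w' then
    if jk.2 == (size w').+1 then ((if jk.1 == 1%N then s.1 else s.2) : nat)%:R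
    else path_value w' jk
  else 0.

Lemma mem_path_coords w jk : jk \in path_coords w ->
  (jk.1 = 1%N \/ jk.1 = 2%N) /\ (1 <= jk.2 <= size w)%N.
Proof.
elim: w => [|s w IH] //=; rewrite !inE => /orP[/eqP ->|/orP[/eqP ->|/IH [j12]]] /=.
- by split; [left|].
- by split; [right|].
- by move=> /andP[k1 kw]; split; rewrite // k1 ltnW.
Qed.

Lemma uniq_path_coords w : uniq (path_coords w).
Proof.
elim: w => [|s w IH] //=; rewrite IH andbT inE negb_or /=.
by apply/andP; split; apply/negP => /mem_path_coords[_]; rewrite ltnn andbF.
Qed.

Lemma path_value_cons s w jk :
  jk \in path_coords w -> path_value (s :: w) jk = path_value w jk.
Proof.
move=> /mem_path_coords[_ /andP[_ kw]] /=.
by rewrite ltn_eqF // ltnS.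
Qed.

Lemma path_event_coords w x : path_event w x <->
  (forall jk, jk \in path_coords w -> X jk.1 jk.2 x = path_value w jk).
Proof.
elim: w => [|s w IH] //=; split.
- move=> [/IH Xw [X1 X2]] jk; rewrite !inE => /orP[/eqP ->|/orP[/eqP ->|jkw]] /=.
  + by rewrite eqxx.
  + by rewrite eqxx.
  + by have /= -> := path_value_cons s jkw; exact: Xw.
- move=> Xsw; split; last split.
  + apply/IH => jk jkw; have /= <- := path_value_cons s jkw.
    by rewrite Xsw // !inE jkw !orbT.
  + by have := Xsw (1%N, (size w).+1); rewrite !inE eqxx /= eqxx; apply.
  + by have := Xsw (2%N, (size w).+1); rewrite !inE eqxx orbT /= eqxx; apply.
Qed.

Lemma P_X_coin j k (b : bool) : (j = 1%N \/ j = 2%N) -> (1 <= k)%N ->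
  P (X j k @^-1` [set (b : nat)%:R]) = (if b then p j else 1 - p j)%:E.
Proof.
by move=> j12 k1; case: b; [exact: (X_law j12 k1).1 | exact: (X_law j12 k1).2].
Qed.

Lemma prod_path_coords w :
  (\prod_(jk <- path_coords w) P (X jk.1 jk.2 @^-1` [set path_value w jk]))%E =
  (path_wt q w)%:E.
Proof.
elim: w => [|s w IH]; first by rewrite big_nil.
rewrite !big_cons (eq_big_seq (fun jk => P (X jk.1 jk.2 @^-1` [set path_value w jk]))).
  by rewrite IH /= !eqxx /= !P_X_coin -?EFinM ?mulrA //; [right|left].
by move=> jk /(path_value_cons s) ->.
Qed.

Lemma P_path_event w : P (path_event w) = (path_wt q w)%:E.
Proof.
have -> : path_event w = \bigcap_(jk in [set jk | jk \in path_coords w])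
    ((fun jk => X jk.1 jk.2) jk @^-1` [set path_value w jk]).
  by apply/seteqP; split => x /path_event_coords.
rewrite X_indep ?prod_path_coords ?uniq_path_coords // => jk.
by case/mem_path_coords => j12 /andP[k1 _].
Qed.

Lemma Ssum0 j x : Ssum X j 0 x = 0.
Proof. by rewrite /Ssum big_geq. Qed.

Lemma SsumS j n x : Ssum X j n.+1 x = Ssum X j n x + X j n.+1 x.
Proof. by rewrite /Ssum big_nat_recr. Qed.

Lemma Ssum_path_event w x : path_event w x ->
  Ssum X 1 (size w) x - Ssum X 2 (size w) x = (walk w)%:~R.
Proof.
elim: w => [|s w IH] /=; first by rewrite !Ssum0 subrr.
move=> [/IH Dw [X1 X2]]; rewrite !SsumS X1 X2 intrD -Dw.
by case: s {X1 X2} => [[] []] /=; ring.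
Qed.

Lemma measurable_Ssum j n : (j = 1%N \/ j = 2%N) -> measurable_fun setT (Ssum X j n).
Proof.
move=> j12; elim: n => [|n IH].
  by rewrite (_ : Ssum X j 0 = cst 0) //; apply/funext => x; rewrite Ssum0.
rewrite (_ : Ssum X j n.+1 = Ssum X j n \+ X j n.+1).
  by apply: measurable_funD => //; exact: X_meas.
by apply/funext => x; rewrite SsumS.
Qed.

Definition no_tie n : set T :=
  [set x | forall k, (0 < k <= n)%N -> Ssum X 1 k x != Ssum X 2 k x].

Lemma no_tie0 x : no_tie 0 x.
Proof. by case=> [|k] /andP[]. Qed.

Lemma no_tieS n x :
  no_tie n.+1 x <-> no_tie n x /\ Ssum X 1 n.+1 x != Ssum X 2 n.+1 x.
Proof.
split=> [tie_free|[tie_free tie_n1] k /andP[k0]].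
  split=> [k /andP[k0 kn]|]; apply: tie_free; first by rewrite k0 (leqW kn).
  by rewrite ltn0Sn leqnn.
by rewrite leq_eqVlt => /orP[/eqP -> // | kn]; apply: tie_free; rewrite k0.
Qed.

Lemma no_tie_nonincreasing : nonincreasing_seq no_tie.
Proof.
move=> n m nm; apply/asboolP => x tie_free k /andP[k0 km].
by apply: tie_free; rewrite k0 (leq_trans km).
Qed.

Lemma measurable_no_tie n : measurable (no_tie n).
Proof.
elim: n => [|n IH].
  by rewrite (_ : no_tie 0 = setT) //; apply/seteqP; split => x // _; exact: no_tie0.
rewrite (_ : no_tie n.+1 =
    no_tie n `&` ((Ssum X 1 n.+1 \- Ssum X 2 n.+1) @^-1` (~` [set 0]))).
  apply: measurableI => //; rewrite -[_ @^-1` _]setTI.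
  apply: measurable_funB => //; last exact: measurableC.
  - by apply: measurable_Ssum; left.
  - by apply: measurable_Ssum; right.
apply/seteqP; split => x.
- by move/no_tieS => [tie_free tie_n1]; split => //=; apply/eqP; rewrite subr_eq0.
- by move=> [tie_free /= /eqP]; rewrite subr_eq0 => tie_n1; apply/no_tieS.
Qed.

Lemma no_tie_path_event w x : path_event w x -> no_tie (size w) x <-> avoids0 w.
Proof.
elim: w => [|s w IH] /=; first by split => // _; exact: no_tie0.
move=> [wx X12]; rewrite no_tieS IH // -subr_eq0 (@Ssum_path_event (s :: w)) //=.
by rewrite intr_eq0; split => [[-> ->]|/andP[-> ->]].
Qed.

Lemma P_no_tie n : P (no_tie n) = (avoid_prob q n)%:E.
Proof.
rewrite (measure_path_partition n (measurable_no_tie n)) /avoid_prob /avoidE -sumEFin.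
apply: eq_big_seq => w /size_paths <-.
have [w_avoids|w_ties] := boolP (avoids0 w).
- have -> : no_tie (size w) `&` path_event w = path_event w.
    by apply/seteqP; split => [x [] //|x wx]; split => //; apply/(no_tie_path_event wx).
  by rewrite P_path_event !mul1r.
- have -> : no_tie (size w) `&` path_event w = set0.
    apply/seteqP; split => x // [tie_free wx].
    by move/(no_tie_path_event wx): tie_free; rewrite (negbTE w_ties).
  by rewrite measure0 !mul0r.
Qed.

Lemma J2_le_tie x k : (0 < k)%N -> Ssum X 1 k x = Ssum X 2 k x ->
  (J2 X x <= (k%:R)%:E)%E.
Proof. by move=> k0 tie; apply: ereal_inf_lbound; exists k. Qed.

Lemma J2_eq_oo x : J2 X x = +oo%E <-> forall n, no_tie n x.
Proof.
split=> [J2oo n k /andP[k0 kn]|tie_free].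
  by apply/eqP => /(J2_le_tie k0); rewrite J2oo.
rewrite /J2 (_ : [set _ | _ in _] = set0) ?ereal_inf0 //.
apply/seteqP; split => // y [k [k0 tie] _].
by have := tie_free k k; rewrite k0 leqnn tie eqxx => /(_ isT).
Qed.

Lemma J2_first_tie x m : (forall n, no_tie n x <-> (n < m)%N) ->
  J2 X x = (m%:R)%:E.
Proof.
move=> no_tie_m; have m0 : (0 < m)%N by apply/no_tie_m/no_tie0.
have tie_m : Ssum X 1 m x = Ssum X 2 m x.
  apply/eqP; apply: contraT => tie_free_m.
  suff : (m < m)%N by rewrite ltnn.
  apply/no_tie_m; rewrite -(prednK m0); apply/no_tieS; rewrite prednK //.
  by split => //; apply/no_tie_m; rewrite ltn_predL.
apply/le_anti/andP; split; first exact: J2_le_tie.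
apply: le_ereal_inf_tmp => _ [k [k0 tie_k] <-]; rewrite lee_fin ler_nat leqNgt.
by apply/negP => /no_tie_m/(_ k); rewrite k0 leqnn tie_k eqxx => /(_ isT).
Qed.

Lemma J2_series x : J2 X x = (\sum_(n <oo) (\1_(no_tie n) x)%:E)%E.
Proof.
have [tie_free|/existsNP[n0 tie_n0]] := pselect (forall n, no_tie n x).
  rewrite (J2_eq_oo x).2 // -(eseries_one R).
  by apply: eq_eseriesr => n _; rewrite indicE mem_set.
have ex_tie : exists n, ~~ `[< no_tie n x >] by exists n0; apply/asboolPn.
have no_tie_first : forall n, no_tie n x <-> (n < ex_minn ex_tie)%N.
  case: ex_minnP => m /asboolPn tie_m min_m n; split => [tie_free|nm].
    rewrite ltnNge; apply/negP => mn; apply: tie_m => k /andP[k0 km].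
    by apply: tie_free; rewrite k0 (leq_trans km mn).
  apply: contrapT => tie_n; suff : (m <= n)%N by rewrite leqNgt nm.
  by apply: min_m; apply/asboolPn.
rewrite (J2_first_tie no_tie_first) -eseries_ltn.
apply: eq_eseriesr => n _; rewrite indicE; congr (nat_of_bool _)%:R%:E.
by apply/idP/idP => [/no_tie_first/mem_set|/set_mem/no_tie_first].
Qed.

Lemma integral_J2 : (\int[P]_x J2 X x = \sum_(n <oo) (avoid_prob q n)%:E)%E.
Proof.
rewrite (eq_integral (fun x => \sum_(n <oo) (\1_(no_tie n) x)%:E)%E); last first.
  by move=> x _; exact: J2_series.
rewrite integral_nneseries //.
- apply: eq_eseriesr => n _.
  by rewrite integral_indic ?setIT //; [exact: P_no_tie|exact: measurable_no_tie].
- move=> n; apply/measurable_EFinP; apply: measurable_indic.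
  exact: measurable_no_tie.
Qed.

Lemma P_J2_oo : 0 <= p 1%N <= 1 -> 0 <= p 2%N <= 1 ->
  P [set x | J2 X x = +oo%E] = `|p 1%N - p 2%N|%:E.
Proof.
move=> p1_01 p2_01; have q_ge0 := bernoulli_pair_ge0 p1_01 p2_01.
have q_sum1 := bernoulli_pair_sum1 (p 1%N) (p 2%N).
have -> : [set x | J2 X x = +oo%E] = \bigcap_n no_tie n.
  apply/seteqP; split => [x /J2_eq_oo tie_free n _|x tie_free]; first exact: tie_free.
  by apply/J2_eq_oo => n; exact: tie_free.
have P_lim : P \o no_tie @ \oo --> P (\bigcap_n no_tie n).
  apply: nonincreasing_cvg_mu measurable_no_tie _ no_tie_nonincreasing.
  - by rewrite (le_lt_trans (probability_le1 _ _)) ?ltry //; exact: measurable_no_tie.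
  - exact: bigcapT_measurable measurable_no_tie.
have f_lim : P \o no_tie @ \oo --> `|p 1%N - p 2%N|%:E.
  rewrite -bernoulli_pair_mean (_ : P \o no_tie = fun n => (avoid_prob q n)%:E).
    by apply/fine_cvgP; split; [exact: nearW | exact: avoid_prob_cvg].
  by apply/funext => n /=; rewrite P_no_tie.
exact: cvg_unique P_lim f_lim.
Qed.

End TwoBernoulliSequences.

Theorem theorem3 (d : measure_display) (T : measurableType d) (R : realType)
  (P : probability T R) (X : nat -> nat -> T -> R) (p : nat -> R) :
  0 < p 1%N < 1 -> 0 < p 2%N < 1 ->
  (forall j k, (j = 1%N \/ j = 2%N) -> (1 <= k)%N ->
     measurable_fun setT (X j k)) ->
  (forall j k, (j = 1%N \/ j = 2%N) -> (1 <= k)%N ->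
     P [set x | X j k x = 1] = (p j)%:E /\
     P [set x | X j k x = 0] = (1 - p j)%:E) ->
  mutually_independent P
    [set jk : nat * nat | (jk.1 = 1%N \/ jk.1 = 2%N) /\ (1 <= jk.2)%N]
    (fun jk => X jk.1 jk.2) ->
  P [set x | J2 X x = +oo%E] = `|p 1%N - p 2%N|%:E /\
  (\int[P]_x J2 X x = +oo)%E.
Proof.
move=> /andP[p1_gt0 p1_lt1] /andP[p2_gt0 p2_lt1] X_meas X_law X_indep.
have p1_01 : 0 <= p 1%N <= 1 by rewrite !ltW.
have p2_01 : 0 <= p 2%N <= 1 by rewrite !ltW.
split; first exact: P_J2_oo.
rewrite (integral_J2 X_meas X_law X_indep); apply: avoid_prob_series_oo.
- exact: bernoulli_pair_ge0.
- exact: bernoulli_pair_sum1.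
- by rewrite bernoulli_pair_var; nra.
Qed.
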